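(* Let $p\ge1$. Let $U$, $V$ be discrete random variables taking values in a common finite set $\mathcal{U}$, and $W$ a discrete random variable taking values in a finite set $\mathcal{W}$, all on a common probability space, such that $\|u-u'\|_p=\sqrt[p]{2}$ for distinct $u,u'\in\mathcal{U}$ and $\|w-w'\|_p=\sqrt[p]{2}$ for distinct $w,w'\in\mathcal{W}$ (and $0$ for equal points). Equip pairs with the ground metric $\|(u,w)-(u',w')\|_p=\left(\|u-u'\|_p^p+\|w-w'\|_p^p\right)^{1/p}$. Then, with $W_1$ the 1-Wasserstein distance, $$W_1(p(U,W),p(U)p(W))=\sum_{w}W_1(p(U\mid W=w),p(U))\,\mathbb{P}(W=w),$$ $$W_1(p(U,W),p(V,W))=\sum_{w}W_1(p(U\mid W=w),p(V\mid W=w))\,\mathbb{P}(W=w),$$ $$W_1(p(U)p(W),p(V)p(W))=\sum_{w}W_1(p(U),p(V))\,\mathbb{P}(W=w).$$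
   Context: $p(U,W)$ denotes the joint law, $p(U)p(W)$ the product of marginal laws, and $p(U\mid W=w)$ the conditional law. *)

From HB Require Import structures.
From mathcomp Require Import all_boot all_order all_algebra.
From mathcomp Require Import all_classical all_reals all_analysis.
Set Implicit Arguments. Unset Strict Implicit. Unset Printing Implicit Defensive.
Import Order.TTheory GRing.Theory Num.Theory.
Local Open Scope classical_set_scope.
Local Open Scope ring_scope.

Definition pnorm (R : realType) (p : R) (n : nat) (x : 'rV[R]_n) : R :=
  (\sum_(i < n) `|x ord0 i| `^ p) `^ p^-1.

Definition coupling (R : realType) (X Y : finType) (mu : X -> R) (nu : Y -> R)
  (pi : X * Y -> R) : Prop :=
  [/\ forall z, 0 <= pi z,
      forall x, \sum_(y : Y) pi (x, y) = mu x
    & forall y, \sum_(x : X) pi (x, y) = nu y].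

Definition W1 (R : realType) (X : finType) (c : X -> X -> R) (mu nu : X -> R) : R :=
  inf [set (\sum_(z : X * X) pi z * c z.1 z.2) | pi in [set pi | coupling mu nu pi]].

Definition pair_cost (R : realType) (p : R) (A B : finType)
  (cA : A -> A -> R) (cB : B -> B -> R) (x y : A * B) : R :=
  (cA x.1 y.1 `^ p + cB x.2 y.2 `^ p) `^ p^-1.

Section Laws.
Context (R : realType) (d : measure_display) (T : measurableType d)
  (P : probability T R).

Definition law (A : finType) (X : T -> A) (a : A) : R :=
  fine (P (X @^-1` [set a])).

Definition jlaw (A B : finType) (X : T -> A) (Y : T -> B) (z : A * B) : R :=
  fine (P (X @^-1` [set z.1] `&` Y @^-1` [set z.2])).

Definition plaw (A B : finType) (X : T -> A) (Y : T -> B) (z : A * B) : R :=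
  law X z.1 * law Y z.2.

Definition claw (A B : finType) (X : T -> A) (Y : T -> B) (b : B) (a : A) : R :=
  jlaw X Y (a, b) / law Y b.
End Laws.

From HB Require Import structures.
From mathcomp Require Import all_boot all_order all_algebra.
From mathcomp Require Import all_classical all_reals all_analysis.
From mathcomp Require Import lra.

Set Implicit Arguments.
Unset Strict Implicit.
Unset Printing Implicit Defensive.
Import Order.TTheory GRing.Theory Num.Theory.
Local Open Scope classical_set_scope.
Local Open Scope ring_scope.

(* Distinct points of U are all at distance k = 2^(1/p), and so are those of W.
   Hence the pair cost vanishes on the diagonal, is at least k off it, and
   equals k between pairs with the same W-coordinate.  For such a cost and two
   laws giving equal mass to every W-fibre, a coupling must move the surplus
   sum_x (mu x - min (mu x) (nu x)) off the diagonal at cost at least k per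
   unit, and moving it inside the fibres costs exactly k: W1 is k times the
   total variation.  The total variation splits over the fibres, and on the
   fibre W = w both laws are P(W = w) times laws of U, whose W1 is again k
   times their total variation. *)

Lemma sumr_pair (V : nmodType) (A B : finType) (F : A * B -> V) :
  \sum_z F z = \sum_a \sum_b F (a, b).
Proof. by rewrite pair_bigA; apply: eq_bigr => -[]. Qed.

Lemma sumr_snd_eq (V : nmodType) (A B : finType) (F : A * B -> V) b :
  \sum_(z | z.2 == b) F z = \sum_a F (a, b).
Proof.
rewrite big_mkcond sumr_pair; apply: eq_bigr => a _.
by rewrite -big_mkcond big_pred1_eq.
Qed.

Definition tv_dist {R : realDomainType} {X : finType} (mu nu : X -> R) : R :=
  \sum_x (mu x - Num.min (mu x) (nu x)).

Lemma tv_distZr (R : realDomainType) (X : finType) (mu nu : X -> R) q : 0 <= q ->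
  tv_dist (fun x => mu x * q) (fun x => nu x * q) = tv_dist mu nu * q.
Proof.
move=> q_ge0; rewrite /tv_dist mulr_suml; apply: eq_bigr => x _.
by rewrite -minr_pMl // mulrBl.
Qed.

Lemma tv_dist_pair (R : realDomainType) (A B : finType) (mu nu : A * B -> R) :
  tv_dist mu nu = \sum_b tv_dist (fun a => mu (a, b)) (fun a => nu (a, b)).
Proof. by rewrite /tv_dist sumr_pair exchange_big. Qed.

Lemma W1_eq (R : realType) (X : finType) (c : X -> X -> R) (mu nu : X -> R) r :
  (exists2 pi, coupling mu nu pi & \sum_z pi z * c z.1 z.2 = r) ->
  (forall pi, coupling mu nu pi -> r <= \sum_z pi z * c z.1 z.2) ->
  W1 c mu nu = r.
Proof.
move=> [pi pi_cpl <-] pi_min.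
rewrite /W1; set S := [set _ | _ in _].
have S_pi : S (\sum_z pi z * c z.1 z.2) by exists pi.
have S_lb : lbound S (\sum_z pi z * c z.1 z.2) by move=> _ [pi' /pi_min ? <-].
apply/eqP; rewrite eq_le; apply/andP; split.
  by apply: ge_inf => //; exists (\sum_z pi z * c z.1 z.2).
by apply: lb_le_inf => //; exists (\sum_z pi z * c z.1 z.2).
Qed.

Section BlockTransport.
Variables (R : realType) (X B : finType) (g : X -> B) (c : X -> X -> R) (k : R).
Hypotheses (k_ge0 : 0 <= k) (c_diag : forall x, c x x = 0)
  (c_ge : forall x y, x != y -> k <= c x y).

Lemma transport_cost_ge (mu nu : X -> R) pi : coupling mu nu pi ->
  k * tv_dist mu nu <= \sum_z pi z * c z.1 z.2.
Proof.
case=> pi_ge0 pi_mu pi_nu; rewrite sumr_pair mulr_sumr; apply: ler_sum => x _.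
have diag_le : pi (x, x) <= Num.min (mu x) (nu x).
  rewrite le_min -{1}pi_mu -pi_nu; apply/andP.
  by split; rewrite (bigD1 x) //= lerDl sumr_ge0.
have mu_split : mu x = pi (x, x) + \sum_(y | y != x) pi (x, y).
  by rewrite -pi_mu (bigD1 x).
rewrite (bigD1 x) //= c_diag mulr0 add0r.
apply: (@le_trans _ _ (k * \sum_(y | y != x) pi (x, y))).
  by rewrite ler_wpM2l // {1}mu_split; move: diag_le; lra.
rewrite mulr_sumr; apply: ler_sum => y yx.
by rewrite mulrC ler_wpM2l // c_ge // eq_sym.
Qed.

Hypothesis c_block : forall x y, x != y -> g x = g y -> c x y = k.
Variables mu nu : X -> R.
Hypotheses (mu_ge0 : forall x, 0 <= mu x) (nu_ge0 : forall x, 0 <= nu x)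
  (block_mass : forall b, \sum_(x | g x == b) mu x = \sum_(x | g x == b) nu x).

Let surplus x := mu x - Num.min (mu x) (nu x).
Let deficit x := nu x - Num.min (mu x) (nu x).
Let block_surplus b := \sum_(x | g x == b) surplus x.

Let surplus_ge0 x : 0 <= surplus x.
Proof. by rewrite subr_ge0 ge_min lexx. Qed.

Let deficit_ge0 x : 0 <= deficit x.
Proof. by rewrite subr_ge0 ge_min lexx orbT. Qed.

Let surplus_deficit x : surplus x * deficit x = 0.
Proof.
by rewrite /surplus /deficit minEle; case: ifP => _; rewrite subrr ?mul0r ?mulr0.
Qed.

Let block_deficit b : \sum_(x | g x == b) deficit x = block_surplus b.
Proof. by rewrite /block_surplus !sumrB block_mass. Qed.

(* Keep min(mu, nu) in place and, within each block, send the surplus of mu to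
   the deficit of nu proportionally: every unit moved then costs exactly k. *)
Let block_coupling (z : X * X) : R :=
  (if z.2 == z.1 then Num.min (mu z.1) (nu z.1) else 0) +
  (if g z.2 == g z.1 then surplus z.1 * deficit z.2 / block_surplus (g z.1) else 0).

Let block_row x :
  \sum_(y | g y == g x) surplus x * deficit y / block_surplus (g x) = surplus x.
Proof.
rewrite -mulr_suml -mulr_sumr block_deficit.
have [S0|S_neq0] := eqVneq (block_surplus (g x)) 0; last by rewrite mulfK.
suff -> : surplus x = 0 by rewrite !mul0r.
by apply: (psumr_eq0P _ S0) => // y _.
Qed.

Let block_col y :
  \sum_(x | g y == g x) surplus x * deficit y / block_surplus (g x) = deficit y.
Proof.
under eq_bigr => x /eqP <- do rewrite mulrAC.
rewrite -mulr_suml -mulr_suml.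
under eq_bigl => x do rewrite eq_sym.
have [S0|S_neq0] := eqVneq (block_surplus (g y)) 0; last by rewrite divff ?mul1r.
suff -> : deficit y = 0 by rewrite !mulr0.
rewrite -block_deficit in S0; exact: (psumr_eq0P _ S0).
Qed.

Let block_coupling_coupling : coupling mu nu block_coupling.
Proof.
split.
- move=> [x y]; rewrite /block_coupling /=; apply: addr_ge0.
    by case: ifP => // _; rewrite le_min mu_ge0 nu_ge0.
  by case: ifP => // _; rewrite divr_ge0 ?mulr_ge0 ?sumr_ge0.
- move=> x; rewrite /block_coupling big_split -!big_mkcond /= block_row.
  by rewrite big_pred1_eq addrC subrK.
- move=> y; rewrite /block_coupling big_split -!big_mkcond /= block_col.
  by rewrite (eq_bigl _ _ (fun x => eq_sym y x)) big_pred1_eq addrC subrK.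
Qed.

Let block_coupling_cost :
  \sum_z block_coupling z * c z.1 z.2 = k * tv_dist mu nu.
Proof.
rewrite sumr_pair mulr_sumr; apply: eq_bigr => x _ /=.
rewrite -/(surplus x) -block_row mulr_sumr [RHS]big_mkcond /=.
apply: eq_bigr => y _.
rewrite /block_coupling /=; have [->|yx] := eqVneq y x.
  by rewrite eqxx c_diag mulr0 surplus_deficit mul0r mulr0.
have [g_eq|g_neq] := eqVneq (g y) (g x); rewrite add0r; last by rewrite mul0r.
by rewrite c_block 1?eq_sym // mulrC.
Qed.

Lemma W1_block : W1 c mu nu = k * tv_dist mu nu.
Proof.
apply: W1_eq; first by exists block_coupling.
exact: transport_cost_ge.
Qed.

End BlockTransport.

Lemma W1_discrete (R : realType) (X : finType) (c : X -> X -> R) k (mu nu : X -> R) :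
  0 <= k -> (forall x y, c x y = (x != y)%:R * k) ->
  (forall x, 0 <= mu x) -> (forall x, 0 <= nu x) -> \sum_x mu x = \sum_x nu x ->
  W1 c mu nu = k * tv_dist mu nu.
Proof.
move=> k_ge0 c_discrete mu_ge0 nu_ge0 mass.
apply: (@W1_block _ _ unit (fun=> tt)) => // [x|x y xy|x y xy _].
- by rewrite c_discrete eqxx mul0r.
- by rewrite c_discrete xy mul1r.
- by rewrite c_discrete xy mul1r.
Qed.

Lemma pnorm_subrr (R : realType) (p : R) n (x : 'rV[R]_n) : p != 0 ->
  pnorm p (x - x) = 0.
Proof.
move=> p_neq0; rewrite /pnorm big1 ?powR0 ?invr_eq0 // => i _.
by rewrite !mxE subrr normr0 powR0.
Qed.

Section DiscretePairCost.
Variables (R : realType) (p r : R) (A B : finType).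
Variables (cA : A -> A -> R) (cB : B -> B -> R).
Hypotheses (p_gt0 : 0 < p) (r_ge0 : 0 <= r).
Hypotheses (cA_discrete : forall a a', cA a a' = (a != a')%:R * r `^ p^-1)
  (cB_discrete : forall b b', cB b b' = (b != b')%:R * r `^ p^-1).

Let discrete_powR (S : eqType) (s s' : S) :
  ((s != s')%:R * r `^ p^-1) `^ p = (s != s')%:R * r.
Proof.
case: eqVneq => _; first by rewrite !mul0r powR0 // gt_eqF.
by rewrite !mul1r -powRrM mulVf ?gt_eqF // powRr1.
Qed.

Lemma pair_costE x y :
  pair_cost p cA cB x y = ((x.1 != y.1)%:R * r + (x.2 != y.2)%:R * r) `^ p^-1.
Proof. by rewrite /pair_cost cA_discrete cB_discrete !discrete_powR. Qed.

Lemma pair_cost_diag x : pair_cost p cA cB x x = 0.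
Proof. by rewrite pair_costE !eqxx !mul0r addr0 powR0 // invr_eq0 gt_eqF. Qed.

Lemma pair_cost_ge x y : x != y -> r `^ p^-1 <= pair_cost p cA cB x y.
Proof.
case: x y => [a b] [a' b']; rewrite xpair_eqE negb_and pair_costE /= => xy.
have p_ge0 := ltW p_gt0.
apply: ge0_ler_powR; rewrite ?nnegrE ?invr_ge0 ?addr_ge0 ?mulr_ge0 //.
by case: (a != a') (b != b') xy => -[] //= _;
  rewrite ?mul1r ?mul0r ?addr0 ?add0r ?lerDl.
Qed.

Lemma pair_cost_snd_eq x y :
  x != y -> x.2 = y.2 -> pair_cost p cA cB x y = r `^ p^-1.
Proof.
case: x y => [a b] [a' b'] /= + b_eq; rewrite {}b_eq xpair_eqE eqxx andbT => aa'.
by rewrite pair_costE /= aa' eqxx mul1r mul0r addr0.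
Qed.

Lemma W1_pair_cost_mixture (q : B -> R) (mu nu : A * B -> R)
    (muw nuw : B -> A -> R) :
  (forall b, 0 <= q b) ->
  (forall b a, 0 <= muw b a) -> (forall b a, 0 <= nuw b a) ->
  (forall b, q b != 0 -> \sum_a muw b a = \sum_a nuw b a) ->
  (forall a b, mu (a, b) = muw b a * q b) ->
  (forall a b, nu (a, b) = nuw b a * q b) ->
  W1 (pair_cost p cA cB) mu nu = \sum_b W1 cA (muw b) (nuw b) * q b.
Proof.
move=> q_ge0 muw_ge0 nuw_ge0 mass muE nuE.
have root_r_ge0 : 0 <= r `^ p^-1 by exact: powR_ge0.
rewrite (@W1_block _ _ _ snd _ (r `^ p^-1)) //; first last.
- move=> b; rewrite !sumr_snd_eq.
  under eq_bigr => a _ do rewrite muE.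
  under [RHS]eq_bigr => a _ do rewrite nuE.
  rewrite -!mulr_suml; have [->|/mass->] := eqVneq (q b) 0; by rewrite ?mulr0.
- by move=> [a b]; rewrite nuE mulr_ge0.
- by move=> [a b]; rewrite muE mulr_ge0.
- exact: pair_cost_snd_eq.
- exact: pair_cost_ge.
- exact: pair_cost_diag.
rewrite tv_dist_pair mulr_sumr; apply: eq_bigr => b _.
have -> : (fun a => mu (a, b)) = (fun a => muw b a * q b).
  by apply/funext => a; rewrite muE.
have -> : (fun a => nu (a, b)) = (fun a => nuw b a * q b).
  by apply/funext => a; rewrite nuE.
rewrite tv_distZr // mulrA.
have [->|/mass mass_b] := eqVneq (q b) 0; first by rewrite !mulr0.
by rewrite (@W1_discrete _ _ _ (r `^ p^-1)).
Qed.

End DiscretePairCost.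

Section Laws.
Context (R : realType) (d : measure_display) (T : measurableType d)
  (P : probability T R).

Lemma fine_measure_preimage_partition (B : finType) (Y : T -> B) (A : set T) :
  measurable A -> (forall b, measurable (Y @^-1` [set b])) ->
  \sum_b fine (P (A `&` Y @^-1` [set b])) = fine (P A).
Proof.
move=> mA mY; rewrite sum_fine; last first.
  by move=> b _; apply: fin_num_measure; exact: measurableI.
congr fine; rewrite (big_enum_val (A := predT)) /= -measure_bigsetU_ord //.
- congr (P _); rewrite -bigcup_seq; apply/seteqP; split=> [t [i _ []//]|t At].
  by exists (enum_rank (Y t)); rewrite /= ?mem_index_enum ?enum_rankK.
- by move=> i; exact: measurableI.
- by move=> i j _ _ [t [[_ ti] [_ tj]]]; apply: enum_val_inj; rewrite -ti -tj.
Qed.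

Lemma law_ge0 (A : finType) (X : T -> A) a : 0 <= law P X a.
Proof. exact/fine_ge0/measure_ge0. Qed.

Lemma jlaw_ge0 (A B : finType) (X : T -> A) (Y : T -> B) z : 0 <= jlaw P X Y z.
Proof. exact/fine_ge0/measure_ge0. Qed.

Variables (A B : finType) (X : T -> A) (Y : T -> B).
Hypotheses (mX : forall a, measurable (X @^-1` [set a]))
  (mY : forall b, measurable (Y @^-1` [set b])).

Lemma claw_ge0 b a : 0 <= claw P X Y b a.
Proof. by rewrite divr_ge0 ?jlaw_ge0 //; exact: law_ge0. Qed.

Lemma sum_law : \sum_a law P X a = 1.
Proof.
rewrite /law; under eq_bigr => a _ do rewrite -[X @^-1` _]setTI.
by rewrite fine_measure_preimage_partition // probability_setT.
Qed.

Lemma sum_jlaw_fst b : \sum_a jlaw P X Y (a, b) = law P Y b.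
Proof.
rewrite /law -(fine_measure_preimage_partition (mY b) mX).
by apply: eq_bigr => a _; rewrite /jlaw setIC.
Qed.

Lemma jlaw_le_law a b : jlaw P X Y (a, b) <= law P Y b.
Proof.
by rewrite -sum_jlaw_fst (bigD1 a) //= lerDl sumr_ge0 // => a' _; exact: jlaw_ge0.
Qed.

Lemma jlaw_claw a b : jlaw P X Y (a, b) = claw P X Y b a * law P Y b.
Proof.
rewrite /claw; have [Yb0|Yb_neq0] := eqVneq (law P Y b) 0; last by rewrite divfK.
by apply/eqP; rewrite Yb0 mulr0 eq_le jlaw_ge0 -Yb0 jlaw_le_law.
Qed.

Lemma sum_claw b : law P Y b != 0 -> \sum_a claw P X Y b a = 1.
Proof. by move=> Yb_neq0; rewrite /claw -mulr_suml sum_jlaw_fst divff. Qed.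

End Laws.

Theorem lemma7 (R : realType) (d : measure_display) (T : measurableType d)
  (P : probability T R) (p : R) (n m : nat)
  (SU SW : finType) (eU : SU -> 'rV[R]_n) (eW : SW -> 'rV[R]_m)
  (U V : T -> SU) (W : T -> SW) :
  1 <= p ->
  (forall u u' : SU, u != u' -> pnorm p (eU u - eU u') = 2 `^ p^-1) ->
  (forall w w' : SW, w != w' -> pnorm p (eW w - eW w') = 2 `^ p^-1) ->
  (forall u, measurable (U @^-1` [set u])) ->
  (forall u, measurable (V @^-1` [set u])) ->
  (forall w, measurable (W @^-1` [set w])) ->
  let cU := fun u u' => pnorm p (eU u - eU u') in
  let cW := fun w w' => pnorm p (eW w - eW w') in
  let cUW := pair_cost p cU cW in
  [/\ W1 cUW (jlaw P U W) (plaw P U W)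
        = \sum_(w : SW) W1 cU (claw P U W w) (law P U) * law P W w,
      W1 cUW (jlaw P U W) (jlaw P V W)
        = \sum_(w : SW) W1 cU (claw P U W w) (claw P V W w) * law P W w
    & W1 cUW (plaw P U W) (plaw P V W)
        = \sum_(w : SW) W1 cU (law P U) (law P V) * law P W w].
Proof.
move=> p_ge1 hU hW mU mV mW cU cW cUW.
have p_gt0 : 0 < p := lt_le_trans ltr01 p_ge1.
have cU_discrete u u' : cU u u' = (u != u')%:R * 2 `^ p^-1.
  by case: eqVneq => [<-|/hU]; rewrite ?mul1r // mul0r /cU pnorm_subrr ?gt_eqF.
have cW_discrete w w' : cW w w' = (w != w')%:R * 2 `^ p^-1.
  by case: eqVneq => [<-|/hW]; rewrite ?mul1r // mul0r /cW pnorm_subrr ?gt_eqF.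
have mixture := W1_pair_cost_mixture p_gt0 (ler0n _ 2) cU_discrete cW_discrete
  (law_ge0 P W).
by split; apply: mixture => *;
  rewrite ?claw_ge0 ?law_ge0 ?sum_claw ?sum_law //; exact: jlaw_claw.
Qed.
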